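(* Let $b:(0,\infty)\to(0,\infty)$ be a slowly varying function. Then there is a function $c:(0,\infty)\to(0,\infty)$ which satisfies $c\approx b$ on $(0,\infty)$, is also slowly varying, and has continuous classical derivatives of all orders (i.e. $c\in\mathcal{C}^\infty((0,\infty))$).
   Context: A measurable function $b:(0,\infty)\to(0,\infty)$ is called slowly varying (s.v.) if for every $\varepsilon>0$ there exist a non-decreasing function $b_\varepsilon$ and a non-increasing function $b_{-\varepsilon}$ on $(0,\infty)$ such that $t^{\varepsilon}b(t)\approx b_\varepsilon(t)$ and $t^{-\varepsilon}b(t)\approx b_{-\varepsilon}(t)$ on $(0,\infty)$. Here $f\approx g$ on a set $A$ means that there is a constant $C\ge 1$ (independent of the argument) such that $C^{-1}g(t)\le f(t)\le C g(t)$ for all $t\in A$. Measurability is with respect to Lebesgue measure. *)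

From HB Require Import structures.
From mathcomp Require Import all_boot all_order all_algebra.
From mathcomp Require Import all_classical all_reals all_analysis.
Set Implicit Arguments. Unset Strict Implicit. Unset Printing Implicit Defensive.
Import Order.TTheory GRing.Theory Num.Theory numFieldNormedType.Exports.
Local Open Scope classical_set_scope.
Local Open Scope ring_scope.

(* Lebesgue measurable subsets of R: the completion of the Borel sigma-algebra
   w.r.t. Lebesgue measure, i.e. A differs from a Borel set by a subset of a
   Borel null set. *)
Definition lebesgue_measurable_set {R : realType} (A : set R) : Prop :=
  exists B N : set R, [/\ measurable B, measurable N,
    (lebesgue_measure N = 0)%E & (A `\` B) `|` (B `\` A) `<=` N].

Definition lmeasurable_on_pos {R : realType} (f : R -> R) : Prop :=
  forall Y : set R, measurable Y ->
    lebesgue_measurable_set ([set t | 0 < t] `&` f @^-1` Y).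

Definition approx_pos {R : realType} (f g : R -> R) : Prop :=
  exists C : R, 1 <= C /\
    forall t : R, 0 < t -> C^-1 * g t <= f t /\ f t <= C * g t.

Definition nondecr_pos {R : realType} (f : R -> R) : Prop :=
  forall x y : R, 0 < x -> x <= y -> f x <= f y.

Definition nonincr_pos {R : realType} (f : R -> R) : Prop :=
  forall x y : R, 0 < x -> x <= y -> f y <= f x.

(* b : (0,oo) -> (0,oo) (represented as a function R -> R, values on (0,oo)
   positive; values outside (0,oo) are irrelevant). *)
Definition pos_on_pos {R : realType} (b : R -> R) : Prop :=
  forall t : R, 0 < t -> 0 < b t.

Definition slowly_varying {R : realType} (b : R -> R) : Prop :=
  [/\ pos_on_pos b, lmeasurable_on_pos b &
    forall eps : R, 0 < eps ->
      (exists bp : R -> R, nondecr_pos bp /\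
          approx_pos (fun t => t `^ eps * b t) bp) /\
      (exists bm : R -> R, nonincr_pos bm /\
          approx_pos (fun t => t `^ (- eps) * b t) bm)].

Definition smooth_on_pos {R : realType} (c : R -> R) : Prop :=
  forall (n : nat) (x : R), 0 < x ->
    derivable (derive1n n c) x 1 /\ (derive1n n c y @[y --> x] --> derive1n n c x).

From HB Require Import structures.
From mathcomp Require Import all_boot all_order all_algebra.
From mathcomp Require Import all_classical all_reals all_analysis.
From mathcomp Require Import ring lra zify measurable_realfun.
Set Implicit Arguments. Unset Strict Implicit. Unset Printing Implicit Defensive.
Import Order.TTheory GRing.Theory Num.Theory numFieldNormedType.Exports.
Local Open Scope classical_set_scope.
Local Open Scope ring_scope.

(* Let psi be a smooth bump, built from the flat function exp(-1/x), whose
   support in the variable ln t lies in (-1, 2) and which is bounded below for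
   ln t in [0, 1].  Then c(t) = sum_m b(e^m) psi(e^-m t) is a locally finite
   sum of smooth functions: for t > 0 only m = floor(ln t) + {-1, 0, 1}
   contribute, and near any t0 the indices floor(ln t0) + {-2, ..., 2}
   suffice.  Slow variation with exponent 1 makes b(s) and b(t) comparable
   whenever s/t and t/s are bounded, hence c is comparable with b; being
   moreover continuous and positive, c inherits slow variation from b. *)

Section Smooth.
Variable R : realType.
Implicit Types f g : R -> R.

Definition derivable_upto n f :=
  forall k, (k < n)%N -> forall x : R, derivable (derive1n k f) x 1.

Definition smooth f := forall n, derivable_upto n f.

Lemma derivable_uptoS n f :
  derivable_upto n.+1 f <-> (forall x, derivable f x 1) /\ derivable_upto n (derive1 f).
Proof.
split=> [h|[df h] [|k] kn x].
- by split=> [|k kn x]; [exact: h 0%N isT | rewrite -derive1Sn; exact: h].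
- exact: df.
- by rewrite derive1Sn; exact: h.
Qed.

Lemma derivable_uptoW m n f : (m <= n)%N -> derivable_upto n f -> derivable_upto m f.
Proof. by move=> mn h k km; apply: h; apply: leq_trans mn. Qed.

Lemma derivable_upto_cst n (a : R) : derivable_upto n (cst a).
Proof.
elim: n a => [|n IH] a; first by move=> k.
apply/derivable_uptoS; split=> [x|]; first exact: derivable_cst.
have -> : derive1 (cst a) = cst 0 :> (R -> R) by apply/funext => x; rewrite derive1_cst.
exact: IH.
Qed.

Lemma derivable_upto_id n : derivable_upto n (@id R).
Proof.
case: n => [|n]; first by move=> k.
apply/derivable_uptoS; split=> [x|]; first exact: derivable_id.
have -> : derive1 (@id R) = cst 1 by apply/funext => x; rewrite derive1_id.
exact: derivable_upto_cst.
Qed.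

Lemma derivable_uptoD n f g :
  derivable_upto n f -> derivable_upto n g -> derivable_upto n (f + g).
Proof.
elim: n f g => [|n IH] f g; first by move=> _ _ k.
move=> /derivable_uptoS[df hf] /derivable_uptoS[dg hg].
apply/derivable_uptoS; split=> [x|]; first exact: derivableD.
have -> : derive1 (f + g) = derive1 f + derive1 g.
  by apply/funext => x; rewrite derive1E (deriveD (df x) (dg x)) -!derive1E.
exact: IH.
Qed.

Lemma derivable_uptoM n f g :
  derivable_upto n f -> derivable_upto n g -> derivable_upto n (f * g).
Proof.
elim: n f g => [|n IH] f g; first by move=> _ _ k.
move=> hf hg; have /derivable_uptoS[df hf'] := hf; have /derivable_uptoS[dg hg'] := hg.
apply/derivable_uptoS; split=> [x|]; first exact: derivableM.
have -> : derive1 (f * g) = f * derive1 g + g * derive1 f.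
  by apply/funext => x; rewrite derive1E (deriveM (df x) (dg x)) -!derive1E.
have [hfn hgn] := (derivable_uptoW (leqnSn n) hf, derivable_uptoW (leqnSn n) hg).
exact: derivable_uptoD (IH _ _ hfn hg') (IH _ _ hgn hf').
Qed.

Lemma smooth_derive1 f : smooth f -> smooth (derive1 f).
Proof. by move=> h n; have /derivable_uptoS[] := h n.+1. Qed.

Lemma smooth_derivable f x : smooth f -> derivable f x 1.
Proof. by move=> h; exact: h 1%N 0%N isT x. Qed.

Lemma smooth_cst (a : R) : smooth (cst a).
Proof. by move=> n; exact: derivable_upto_cst. Qed.

Lemma smooth_id : smooth (@id R).
Proof. by move=> n; exact: derivable_upto_id. Qed.

Lemma smoothD f g : smooth f -> smooth g -> smooth (f + g).
Proof. by move=> hf hg n; exact: derivable_uptoD. Qed.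

Lemma smoothM f g : smooth f -> smooth g -> smooth (f * g).
Proof. by move=> hf hg n; exact: derivable_uptoM. Qed.

Lemma smooth_comp f g : smooth f -> smooth g -> smooth (f \o g).
Proof.
move=> + sg n; elim: n f => [|n IH] f sf; first by move=> k.
have dg x : derivable g x 1 := smooth_derivable sg.
have df x : derivable f x 1 := smooth_derivable sf.
apply/derivable_uptoS; split=> [x|].
  apply/derivable1_diffP/differentiable_comp; exact/derivable1_diffP.
have -> : derive1 (f \o g) = (derive1 f \o g) * derive1 g.
  by apply/funext => x; rewrite derive1_comp.
by apply: derivable_uptoM; [exact/IH/smooth_derive1 | exact: smooth_derive1 sg n].
Qed.

End Smooth.

Section Flat.
Variable R : realType.
Implicit Types (p r : {poly R}) (x y h : R).

Definition flat p x := if 0 < x then p.[x^-1] * expR (- x^-1) else 0.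

(* (p(1/x) e^(-1/x))' = (X^2 (p - p'))(1/x) e^(-1/x) *)
Definition flat_dpoly p := 'X^2 * (p - deriv p).

Lemma is_derive_poly_expRNV p x : x != 0 ->
  is_derive x 1 (fun y => p.[y^-1] * expR (- y^-1))
    ((flat_dpoly p).[x^-1] * expR (- x^-1)).
Proof.
move=> x0.
have Dinv : is_derive x 1 (fun y : R => y^-1) (- x ^- 2).
  by apply: is_derive_eq (is_deriveV x0 (is_derive_id x 1)) _; rewrite scaler1.
have Dp : is_derive x 1 (horner p \o GRing.inv) ((deriv p).[x^-1] * - x ^- 2).
  exact: is_derive1_comp _ Dinv.
have De : is_derive x 1 (expR \o (fun y => - y^-1)) (expR (- x^-1) * x ^- 2).
  by apply: is_derive_eq (is_derive1_comp _ (is_deriveN Dinv)) _; rewrite opprK.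
apply: is_derive_eq (is_deriveM Dp De) _.
rewrite /flat_dpoly !hornerE exprVn /GRing.scale /=.
ring.
Qed.

Lemma poly_expRN_bound r :
  exists2 M, 0 <= M & forall y, 1 <= y -> `|r.[y]| * expR (- y) <= M / y.
Proof.
set d := size r; set A := \sum_(i < d) `|r`_i|.
have A0 : 0 <= A by apply: sumr_ge0 => i _.
have r_le y : 1 <= y -> `|r.[y]| <= A * y ^+ d.
  move=> y1; rewrite horner_coef; apply: le_trans (ler_norm_sum _ _ _) _.
  rewrite /A mulr_suml; apply: ler_sum => i _.
  rewrite normrM normrX (ger0_norm (le_trans ler01 y1)).
  by apply: ler_wpM2l; [exact: normr_ge0 | apply: ler_weXn2l => //; apply: ltnW].
have fact_gt0 : (0 : R) < (d.+1)`!%:R by rewrite ltr0n fact_gt0.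
exists (A * (d.+1)`!%:R) => [|y y1]; first exact: mulr_ge0 (ltW _).
have y0 : 0 < y := lt_le_trans ltr01 y1.
have exp_ge : y ^+ d.+1 / (d.+1)`!%:R <= expR y.
  by apply: le_trans (expR_ge1Dxn d (ltW y0)); rewrite lerDr.
apply: le_trans (ler_wpM2r (expR_ge0 _) (r_le y y1)) _.
have inv_le : (expR y)^-1 <= (y ^+ d.+1 / (d.+1)`!%:R)^-1.
  by rewrite lef_pV2 ?posrE ?expR_gt0 // divr_gt0 // exprn_gt0.
rewrite expRN; apply: le_trans (ler_wpM2l _ inv_le) _.
  by rewrite mulr_ge0 // exprn_ge0 // ltW.
rewrite le_eqVlt; apply/orP; left; apply/eqP; rewrite exprS.
by field; rewrite expf_neq0 ?gt_eqF.
Qed.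

Lemma flat_le_sqr p :
  exists2 M, 0 <= M & forall h, `|h| <= 1 -> `|flat p h| <= M * h ^+ 2.
Proof.
have [M M0 HM] := poly_expRN_bound (p * 'X).
exists M => // h h1; rewrite /flat; case: ifPn => [h0|_]; last first.
  by rewrite normr0 mulr_ge0 // sqr_ge0.
have /HM : 1 <= h^-1 by rewrite invf_ge1 // -(gtr0_norm h0).
rewrite hornerMX invrK normrM (@gtr0_norm _ h^-1) ?invr_gt0 // => le_Mh.
rewrite normrM (ger0_norm (expR_ge0 _)) expr2 mulrCA.
have -> : `|p.[h^-1]| * expR (- h^-1) = h * (`|p.[h^-1]| * h^-1 * expR (- h^-1)).
  by field; rewrite gt_eqF.
by rewrite ler_pM2l.
Qed.

Lemma flat_is_derive0 p : is_derive (0 : R) 1 (flat p) 0.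
Proof.
have [M M0 HM] := flat_le_sqr p.
have flat0 : flat p 0 = 0 by rewrite /flat ltxx.
suff q0 : (fun h => h^-1 *: ((flat p \o shift 0) (h *: 1) - flat p 0)) @ 0^' --> 0.
  by apply: DeriveDef; [apply/cvg_ex; exists 0 | exact: cvg_lim].
apply/cvgr0Pnorm_le => eps eps0.
have d0 : 0 < Num.min 1 (eps / (M + 1)) by rewrite lt_min ltr01 divr_gt0 // ltr_wpDl.
near=> h; have : `|h| < Num.min 1 (eps / (M + 1)) by near: h; exact: dnbhs0_lt.
rewrite lt_min => /andP[/ltW h1 he].
rewrite /= flat0 subr0 addr0 [h%:A]mulr1 normrZ normfV.
have [->|h0] := eqVneq h 0; first by rewrite normr0 invr0 mul0r ltW.
rewrite ler_pdivrMl ?normr_gt0 //; apply: le_trans (HM h h1) _.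
rewrite -(real_normK (num_real h)) expr2 mulrA mulrC; apply: ler_wpM2l => //.
apply: le_trans (ler_wpM2l M0 (ltW he)) _.
by rewrite mulrA ler_pdivrMr ?ltr_wpDl // mulrDr mulr1 mulrC lerDl ltW.
Unshelve. all: by end_near.
Qed.

Lemma flat_is_derive p x : is_derive x 1 (flat p) (flat (flat_dpoly p) x).
Proof.
have [x0|x0|->] := ltgtP x 0; last by rewrite /flat ltxx; exact: flat_is_derive0.
- have -> : flat (flat_dpoly p) x = 0 by rewrite /flat ltNge ltW.
  apply: near_eq_is_derive (is_derive_cst 0 x 1).
  by near do rewrite /flat ltNge ltW //=; exact: lt_nbhsl.
- have -> : flat (flat_dpoly p) x = (flat_dpoly p).[x^-1] * expR (- x^-1).
    by rewrite /flat x0.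
  apply: near_eq_is_derive (is_derive_poly_expRNV p (lt0r_neq0 x0)).
  near do rewrite /flat -oppr_lt0 ifT //.
  by apply: Nlt_nbhsl; rewrite oppr_lt0.
Unshelve. all: by end_near.
Qed.

Lemma derive1n_flat n p : derive1n n (flat p) = flat (iter n flat_dpoly p).
Proof.
elim: n p => [|n IH] p //; rewrite derive1Sn iterSr -IH; congr derive1n.
by apply/funext => x; have [_ <-] := flat_is_derive p x; rewrite derive1E.
Qed.

Lemma smooth_flat p : smooth (flat p).
Proof.
by move=> n k _ x; rewrite derive1n_flat; have [] := flat_is_derive (iter k flat_dpoly p) x.
Qed.

End Flat.

Section Bump.
Variable R : realType.
Implicit Types x y : R.

Definition expNinv : R -> R := flat 1.

Lemma expNinvE x : 0 < x -> expNinv x = expR (- x^-1).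
Proof. by move=> x0; rewrite /expNinv /flat x0 hornerC mul1r. Qed.

Lemma expNinv_le0 x : x <= 0 -> expNinv x = 0.
Proof. by move=> x0; rewrite /expNinv /flat ltNge x0. Qed.

Lemma expNinv_gt0 x : 0 < x -> 0 < expNinv x.
Proof. by move=> x0; rewrite expNinvE // expR_gt0. Qed.

Lemma expNinv_ge0 x : 0 <= expNinv x.
Proof. by case: (ltP 0 x) => x0; [exact/ltW/expNinv_gt0 | rewrite expNinv_le0]. Qed.

Lemma expNinv_le1 x : expNinv x <= 1.
Proof.
case: (ltP 0 x) => x0; last by rewrite expNinv_le0.
by rewrite expNinvE // expR_le1 oppr_le0 invr_ge0 ltW.
Qed.

Lemma expNinv_le x y : 0 < x -> x <= y -> expNinv x <= expNinv y.
Proof.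
move=> x0 xy; have y0 := lt_le_trans x0 xy.
by rewrite !expNinvE // ler_expR lerN2 lef_pV2.
Qed.

Lemma smooth_affine (a c : R) : smooth (fun x => a * x + c).
Proof.
have -> : (fun x => a * x + c) = cst a * id + cst c by [].
apply: smoothD; [apply: smoothM|];
  [exact: smooth_cst | exact: smooth_id | exact: smooth_cst].
Qed.

Definition bump x := expNinv (x - 2^-1) * expNinv (expR 1 + 1 - x).

Lemma smooth_bump : smooth bump.
Proof.
have -> : bump = (expNinv \o (fun x => 1 * x + - 2^-1)) *
                 (expNinv \o (fun x => -1 * x + (expR 1 + 1))).
  by apply/funext => x; rewrite /bump !fctE mul1r mulN1r [- x + _]addrC.
by apply: smoothM; apply: smooth_comp;
  [exact: smooth_flat | exact: smooth_affine | exact: smooth_flat | exact: smooth_affine].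
Qed.

Lemma bump_ge0 x : 0 <= bump x.
Proof. by rewrite mulr_ge0 // expNinv_ge0. Qed.

Lemma bump_le1 x : bump x <= 1.
Proof. by rewrite -[1]mulr1 ler_pM ?expNinv_ge0 ?expNinv_le1. Qed.

Lemma bump_eq0l x : x <= 2^-1 -> bump x = 0.
Proof. by move=> x_le; rewrite /bump expNinv_le0 ?mul0r // subr_le0. Qed.

Lemma bump_eq0r x : expR 1 + 1 <= x -> bump x = 0.
Proof. by move=> x_ge; rewrite /bump (@expNinv_le0 (_ - x)) ?mulr0 // subr_le0. Qed.

Lemma bump_lb : exists2 d, 0 < d & forall x, 1 <= x <= expR 1 -> d <= bump x.
Proof.
exists (expNinv 2^-1 * expNinv 1); first by rewrite mulr_gt0 // expNinv_gt0.
move=> x /andP[x1 xe]; apply: ler_pM; rewrite ?expNinv_ge0 //.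
  by apply: expNinv_le; rewrite ?invr_gt0 // lerBrDr; lra.
by apply: expNinv_le => //; rewrite lerBrDr addrC lerD2r.
Qed.

End Bump.

Section SmoothOnPos.
Variable R : realType.
Implicit Types f g : R -> R.

Lemma near_eq_derive1n f g (x : R) : {near x, f =1 g} ->
  forall n, {near x, derive1n n f =1 derive1n n g}.
Proof.
move=> fg; elim=> [|n IH] //; apply: filterS (nbhs_interior IH) => y /= fgy.
change (derive1 (derive1n n f) y = derive1 (derive1n n g) y).
by rewrite !derive1E (near_eq_derive _ fgy).
Qed.

Lemma smooth_on_pos_locally f :
  (forall x : R, 0 < x -> exists2 g, smooth g & {near x, f =1 g}) -> smooth_on_pos f.
Proof.
move=> loc n x x0; have [g sg fg] := loc x x0.
have fgn := near_eq_derive1n fg n.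
have df : derivable (derive1n n f) x 1.
  apply: near_eq_derivable (sg n.+1 n (ltnSn n) x).
  by apply: filterS fgn => y ->.
by split=> //; exact/differentiable_continuous/derivable1_diffP.
Qed.

Lemma lmeasurable_on_pos_continuous f :
  (forall x : R, 0 < x -> {for x, continuous f}) -> lmeasurable_on_pos f.
Proof.
move=> cf Y mY; exists ([set t | 0 < t] `&` f @^-1` Y), set0; split.
- have mf : measurable_fun [set t : R | 0 < t] f.
    apply: open_continuous_measurable_fun; first exact: open_gt.
    by move=> x; rewrite inE; exact: cf.
  exact: mf (open_measurable (open_gt (y := 0))) Y mY.
- exact: measurable0.
- exact: measure0.
- by rewrite setDv setU0.
Qed.

End SmoothOnPos.

Section Approx.
Variable R : realType.
Implicit Types f g h w : R -> R.

Lemma approx_posP f g (A B : R) : 0 < A -> 0 < B ->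
  (forall t, 0 < t -> 0 <= g t /\ A * g t <= f t <= B * g t) -> approx_pos f g.
Proof.
move=> A0 B0 fg; have Ai : 0 < A^-1 by rewrite invr_gt0.
exists (1 + B + A^-1); split=> [|t t0]; first by lra.
have [g0 /andP[lo up]] := fg t t0; split.
- apply: le_trans _ lo; apply: ler_wpM2r => //.
  by rewrite -[A]invrK lef_pV2 ?posrE ?invrK //; lra.
- by apply: le_trans up _; apply: ler_wpM2r => //; lra.
Qed.

Lemma approx_pos_trans f g h : approx_pos f g -> approx_pos g h -> approx_pos f h.
Proof.
move=> [C1 [C11 H1]] [C2 [C21 H2]].
have C10 : 0 < C1 := lt_le_trans ltr01 C11.
have C20 : 0 < C2 := lt_le_trans ltr01 C21.
exists (C1 * C2); split=> [|t t0]; first by rewrite -[1]mulr1 ler_pM.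
have [lo1 up1] := H1 t t0; have [lo2 up2] := H2 t t0; split.
- rewrite invfM -mulrA; apply: le_trans _ lo1.
  by apply: ler_wpM2l => //; rewrite invr_ge0 ltW.
- by apply: le_trans up1 _; rewrite -mulrA; apply: ler_wpM2l => //; exact: ltW.
Qed.

Lemma approx_posMl w f g : (forall t, 0 < t -> 0 <= w t) ->
  approx_pos f g -> approx_pos (fun t => w t * f t) (fun t => w t * g t).
Proof.
move=> w0 [C [C1 H]]; exists C; split=> // t t0; have [lo up] := H t t0.
by split; rewrite mulrCA; apply: ler_wpM2l => //; exact: w0.
Qed.

Lemma approx_pos_gt0 f g : approx_pos f g -> pos_on_pos g -> pos_on_pos f.
Proof.
move=> [C [C1 H]] g0 t t0; apply: lt_le_trans (H t t0).1.
by rewrite mulr_gt0 ?invr_gt0 ?g0 // (lt_le_trans ltr01).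
Qed.

End Approx.

Section SlowlyVarying.
Variable R : realType.
Implicit Types b c f g : R -> R.

Lemma approx_pos_le f g : approx_pos f g ->
  exists2 K, 0 < K & forall s t, 0 < s -> 0 < t -> g s <= g t -> f s <= K * f t.
Proof.
move=> [C [C1 H]]; have C0 : 0 < C := lt_le_trans ltr01 C1.
exists (C * C) => [|s t s0 t0 gst]; first exact: mulr_gt0.
have [_ up] := H s s0; have [lo _] := H t t0.
have gt_le : g t <= C * f t.
  by move: lo; rewrite -(ler_pM2l C0) mulrA mulfV ?gt_eqF // mul1r.
apply: le_trans up _; rewrite -mulrA; apply: ler_wpM2l; first exact: ltW.
exact: le_trans gst gt_le.
Qed.

Lemma slowly_varying_comparable b (Q : R) : slowly_varying b -> 1 <= Q ->
  exists2 K, 0 < K & forall s t, 0 < s -> 0 < t ->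
    s <= Q * t -> t <= Q * s -> b s <= K * b t.
Proof.
move=> [bpos _ /(_ 1 ltr01)[[bp [bp_up bp_b]] [bm [bm_dn bm_b]]]] Q1.
have Q0 : 0 < Q := lt_le_trans ltr01 Q1.
have [K1 K10 le1] := approx_pos_le bp_b; have [K2 K20 le2] := approx_pos_le bm_b.
exists ((K1 + K2) * Q) => [|s t s0 t0 sQt tQs]; first by rewrite mulr_gt0 ?addr_gt0.
have bt0 := bpos t t0.
suff [K K_le bst] : exists2 K, K <= K1 + K2 & b s <= K * Q * b t.
  by apply: le_trans bst _; rewrite ler_wpM2r ?ler_wpM2r ?(ltW bt0) ?(ltW Q0).
have [st|ts] := leP s t.
- exists K1; first by rewrite lerDl ltW.
  have := le1 s t s0 t0 (bp_up s t s0 st).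
  rewrite (powRr1 (ltW s0)) (powRr1 (ltW t0)) => le.
  rewrite -(ler_pM2l s0); apply: le_trans le _.
  have -> : s * (K1 * Q * b t) = K1 * (Q * s * b t) by ring.
  by rewrite ler_pM2l // ler_pM2r.
- exists K2; first by rewrite lerDr ltW.
  have := le2 s t s0 t0 (bm_dn t s t0 (ltW ts)).
  rewrite !powRN (powRr1 (ltW s0)) (powRr1 (ltW t0)) => le.
  have si0 : 0 < s^-1 by rewrite invr_gt0.
  rewrite -(ler_pM2l si0); apply: le_trans le _.
  have -> : s^-1 * (K2 * Q * b t) = K2 * (Q / s * b t) by ring.
  rewrite ler_pM2l // ler_pM2r // -[Q / s]invf_div lef_pV2 ?posrE ?divr_gt0 //.
  by rewrite ler_pdivrMr // mulrC.
Qed.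

Lemma slowly_varying_approx b c : slowly_varying b -> pos_on_pos c ->
  lmeasurable_on_pos c -> approx_pos c b -> slowly_varying c.
Proof.
move=> [_ _ Hb] cpos cmeas cb; split=> // eps eps0.
have [[bp [bp_up bp_b]] [bm [bm_dn bm_b]]] := Hb eps eps0.
split; [exists bp | exists bm]; split=> //;
  by apply: approx_pos_trans (approx_posMl _ cb) _ => // t _; exact: powR_ge0.
Qed.

End SlowlyVarying.

Section Smoothing.
Variable R : realType.
Variable b : R -> R.
Implicit Types (t : R) (m n : int).

Definition bump_at m t := b (expR m%:~R) * bump (expR (- m%:~R) * t).

Definition bump_sum3 n t := bump_at (n - 1) t + bump_at n t + bump_at (n + 1) t.

Definition bump_sum5 n t := bump_at (n - 2) t + bump_sum3 n t + bump_at (n + 2) t.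

Definition smoothing t := bump_sum3 (Num.floor (ln t)) t.

Lemma smooth_bump_at m : smooth (bump_at m).
Proof.
have -> : bump_at m = cst (b (expR m%:~R)) * (@bump R \o (cst (expR (- m%:~R)) * id)).
  by [].
apply: smoothM; first exact: smooth_cst.
apply: smooth_comp; first exact: smooth_bump.
by apply: smoothM; [exact: smooth_cst | exact: smooth_id].
Qed.

Lemma smooth_bump_sum5 n : smooth (bump_sum5 n).
Proof.
have -> : bump_sum5 n = bump_at (n - 2) + (bump_at (n - 1) + bump_at n + bump_at (n + 1))
                        + bump_at (n + 2) by [].
apply: smoothD; [apply: smoothD|]; [|apply: smoothD; [apply: smoothD|]|];
  exact: smooth_bump_at.
Qed.

Lemma expRN_mul t (a : R) : 0 < t -> expR (- a) * t = expR (ln t - a).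
Proof. by move=> t0; rewrite expRD lnK ?posrE // mulrC. Qed.

Lemma bump_at_eq0l t m : 0 < t -> (m <= Num.floor (ln t) - 2)%R -> bump_at m t = 0.
Proof.
move=> t0; rewrite -(ler_int R) rmorphB /= => hm.
have /andP[lo _] := floor_itv (ln t).
rewrite /bump_at bump_eq0r ?mulr0 // expRN_mul //.
have e2 : expR 1 + 1 <= expR 2 :> R.
  have := expR_ge1Dx (1 : R); have := expR_ge1Dx (expR 1 - 1).
  by rewrite -{1}[2]/(1 + 1 : R) expRD; nra.
by apply: le_trans e2 _; rewrite ler_expR; lra.
Qed.

Lemma bump_at_eq0r t m : 0 < t -> (Num.floor (ln t) + 2 <= m)%R -> bump_at m t = 0.
Proof.
move=> t0; rewrite -(ler_int R) rmorphD /= => hm.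
have /andP[_ hi] := floor_itv (ln t); rewrite rmorphD /= in hi.
rewrite /bump_at bump_eq0l ?mulr0 // expRN_mul //.
apply: (@le_trans _ _ (expR (-1))); first by rewrite ler_expR; lra.
rewrite expRN lef_pV2 ?posrE ?expR_gt0 //; have := expR_ge1Dx (1 : R); lra.
Qed.

Lemma bump_sum5E t m : 0 < t ->
  (Num.floor (ln t) - 1 <= m <= Num.floor (ln t) + 1)%R -> bump_sum5 m t = smoothing t.
Proof.
move=> t0 /andP[lo hi]; rewrite /smoothing /bump_sum5 /bump_sum3.
set n := Num.floor (ln t) in lo hi *.
have zl m' : (m' <= n - 2)%R -> bump_at m' t = 0 by exact: bump_at_eq0l.
have zr m' : (n + 2 <= m')%R -> bump_at m' t = 0 by exact: bump_at_eq0r.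
have [->|[->|->]] : m = n - 1 \/ m = n \/ m = n + 1 by lia.
- rewrite (zl (n - 1 - 2)) ?(zl (n - 1 - 1)); try lia.
  have -> : n - 1 + 2 = n + 1 by ring.
  by rewrite subrK !add0r.
- by rewrite (zl (n - 2)) ?(zr (n + 2)); try lia; rewrite add0r addr0.
- rewrite (zr (n + 1 + 1)) ?(zr (n + 1 + 2)); try lia.
  have -> : n + 1 - 2 = n - 1 by ring.
  by rewrite addrK !addr0 addrA.
Qed.

Lemma smoothing_near (s : R) : 0 < s -> {near s, smoothing =1 bump_sum5 (Num.floor (ln s))}.
Proof.
move=> s0; set n := Num.floor (ln s).
have /andP[fl fh] := floor_itv (ln s); rewrite rmorphD /= in fh.
have : s \in `]expR (n - 1)%:~R, expR (n + 1)%:~R[.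
  rewrite in_itv /= -{1 2}(lnK s0) !ltr_expR rmorphB rmorphD /=.
  by apply/andP; split; lra.
move/near_in_itvoo; apply: filterS => t; rewrite in_itv /= => /andP[lo hi].
have t0 : 0 < t := lt_trans (expR_gt0 _) lo.
rewrite -(lnK t0) ltr_expR in lo; rewrite -(lnK t0) ltr_expR in hi.
have f1 : (n - 1 <= Num.floor (ln t))%R by rewrite floor_ge_int ltW.
have f2 : (Num.floor (ln t) < n + 1)%R by rewrite floor_lt_int.
by rewrite bump_sum5E //; lia.
Qed.

Lemma smooth_on_pos_smoothing : smooth_on_pos smoothing.
Proof.
apply: smooth_on_pos_locally => t t0; exists (bump_sum5 (Num.floor (ln t))).
  exact: smooth_bump_sum5.
exact: smoothing_near.
Qed.

Lemma expR_floor_ln_near t m : 0 < t ->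
  (Num.floor (ln t) - 1 <= m <= Num.floor (ln t) + 1)%R ->
  expR m%:~R <= expR 2 * t /\ t <= expR 2 * expR m%:~R.
Proof.
move=> t0 /andP[lo hi]; have /andP[fl fh] := floor_itv (ln t).
rewrite rmorphD /= in fh.
rewrite -(ler_int R) rmorphB /= in lo; rewrite -(ler_int R) rmorphD /= in hi.
by rewrite -(lnK t0) -!expRD !ler_expR; split; lra.
Qed.

Lemma smoothing_approx : slowly_varying b -> approx_pos smoothing b.
Proof.
move=> sv; have [bpos _ _] := sv.
have e2 : 1 <= expR 2 :> R by rewrite -expR0 ler_expR.
have [K K0 cmp] := slowly_varying_comparable sv e2.
have [d d0 bump_d] := @bump_lb R.
apply: (@approx_posP _ _ _ (d / K) (3 * K)); rewrite ?divr_gt0 ?mulr_gt0 // => t t0.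
set n := Num.floor (ln t); have bt0 := bpos t t0.
have b_cmp m : (n - 1 <= m <= n + 1)%R ->
    b (expR m%:~R) <= K * b t /\ b t <= K * b (expR m%:~R).
  by move=> /(expR_floor_ln_near t0)[h1 h2]; split; apply: cmp; rewrite ?expR_gt0.
have at_le m : (n - 1 <= m <= n + 1)%R -> bump_at m t <= K * b t.
  move=> /b_cmp[+ _]; apply: le_trans; rewrite /bump_at -[X in _ <= X]mulr1.
  by apply: ler_wpM2l; rewrite ?bump_le1 // ltW // bpos ?expR_gt0.
have at_ge0 m : 0 <= bump_at m t by rewrite mulr_ge0 ?bump_ge0 // ltW // bpos ?expR_gt0.
have [r1 r2 r3] : [/\ (n - 1 <= n - 1 <= n + 1)%R, (n - 1 <= n <= n + 1)%R
                    & (n - 1 <= n + 1 <= n + 1)%R] by split; lia.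
have at_lb : d / K * b t <= bump_at n t.
  have /andP[fl fh] := floor_itv (ln t); rewrite rmorphD /= in fh.
  have /bump_d d_le : 1 <= expR (- n%:~R) * t <= expR 1.
    rewrite expRN_mul // -[X in X <= _ <= _]expR0 !ler_expR.
    by apply/andP; split; lra.
  have [_ bt_le] := b_cmp n r2.
  have bn_ge : K^-1 * b t <= b (expR n%:~R) by rewrite ler_pdivrMl.
  rewrite /bump_at -mulrA mulrC; apply: ler_pM => //; last exact: ltW.
  by rewrite mulr_ge0 ?invr_ge0 ?ltW.
split; first exact: ltW.
rewrite /smoothing /bump_sum3 -/n; apply/andP; split.
- apply: le_trans at_lb _.
  by rewrite ler_wpDr ?at_ge0 // ler_wpDl ?at_ge0.
- apply: le_trans (lerD (lerD (at_le _ r1) (at_le _ r2)) (at_le _ r3)) _.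
  lra.
Qed.

End Smoothing.

Theorem theorem1p2 (R : realType) (b : R -> R) :
  slowly_varying b ->
  exists c : R -> R,
    [/\ pos_on_pos c, approx_pos c b, slowly_varying c & smooth_on_pos c].
Proof.
move=> sv; have [bpos _ _] := sv.
have cb := smoothing_approx sv.
have cpos := approx_pos_gt0 cb bpos.
have csmooth := smooth_on_pos_smoothing b.
exists (smoothing b); split=> //.
apply: slowly_varying_approx sv cpos _ cb.
by apply: lmeasurable_on_pos_continuous => x x0; have [] := csmooth 0%N x x0.
Qed.
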